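(* Let $G$ be a $6$-regular graph, $\mathcal S$ a canonical path partition of $G$, and $P$ a path component of $\mathcal S$. Let $x_1,x_2\in V_2$ be path neighbors on $P$. If $x_1$ goes to a vertex $o$ that is an end-vertex of a path component $P'\neq P$, then $o$ is the only vertex that $x_2$ goes to.
   Context: All graphs are finite, simple and undirected. A path partition of $G=(V,E)$ is a set of vertex-disjoint paths (single vertices allowed) covering $V$; its members are components. A component with $t\ge3$ vertices is a cycle component if the subgraph induced on its vertex set has a spanning cycle; a one-vertex component is an isolated vertex; every other component is a path component. A path partition is canonical if (1) it has the minimum number of components among all path partitions of $G$; (2) among those, it has the maximum number of cycle components; (3) it has no isolated vertices. Given a canonical path partition $\mathcal S$ of $G$: two vertices are path neighbors if they are consecutive on a path component. An edge of $G$ is a free edge unless it joins two path neighbors or has both endpoints in the same cycle component. $V_1$ is the set of end-vertices of path components together with all vertices of cycle components. $V_2$ is the set of vertices not in $V_1$ that are joined by a free edge to a vertex of $V_1$. A balanced edge is a free edge with one endpoint in $V_1$ and the other in $V_2$; for $x\in V_2$, $y\in V_1$ we say $x$ goes to $y$ if $xy$ is a balanced edge. *)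

(* A simple graph G = (T, e): T a finType of vertices and
   e : rel T a symmetric irreflexive adjacency relation.
   A path partition is encoded as a list S of vertex sequences, each sequence
   listing the vertices of one component in path order. *)
From mathcomp Require Import all_boot.
Set Implicit Arguments. Unset Strict Implicit. Unset Printing Implicit Defensive.

Section PP.
Variables (T : finType) (e : rel T).

Definition is_gpath (c : seq T) : bool :=
  if c is x :: p then path e x p else true.

Definition is_path_partition (S : seq (seq T)) : Prop :=
  [/\ all (fun c => c != [::]) S,
      all is_gpath S,
      uniq (flatten S)
    & forall v : T, v \in flatten S].

(* a component with >= 3 vertices whose vertex set induces a subgraph with a
   spanning (Hamiltonian) cycle *)
Definition cycle_comp (c : seq T) : bool :=
  (2 < size c) && has (cycle e) (permutations c).

Definition isolated_comp (c : seq T) : bool := size c == 1.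

Definition path_comp (c : seq T) : bool :=
  (1 < size c) && ~~ cycle_comp c.

Definition canonical_pp (S : seq (seq T)) : Prop :=
  [/\ is_path_partition S,
      (forall S', is_path_partition S' -> size S <= size S'),
      (forall S', is_path_partition S' -> size S' = size S ->
          count cycle_comp S' <= count cycle_comp S)
    & ~~ has isolated_comp S].

Variable S : seq (seq T).

Definition consec (c : seq T) (u v : T) : bool :=
  ((u, v) \in zip c (behead c)) || ((v, u) \in zip c (behead c)).

Definition path_nbrs (u v : T) : bool :=
  has (fun c => path_comp c && consec c u v) S.

Definition same_cycle_comp (u v : T) : bool :=
  has (fun c => [&& cycle_comp c, u \in c & v \in c]) S.

Definition free_edge (u v : T) : bool :=
  [&& e u v, ~~ path_nbrs u v & ~~ same_cycle_comp u v].

Definition end_vertex (c : seq T) (x : T) : bool :=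
  (c != [::]) && ((head x c == x) || (last x c == x)).

Definition inV1 (x : T) : bool :=
  has (fun c => path_comp c && end_vertex c x) S
  || has (fun c => cycle_comp c && (x \in c)) S.

Definition inV2 (x : T) : bool :=
  ~~ inV1 x && [exists y, inV1 y && free_edge x y].

Definition balanced_edge (u v : T) : bool :=
  free_edge u v && ((inV1 u && inV2 v) || (inV2 u && inV1 v)).

Definition goes_to (x y : T) : bool :=
  [&& inV2 x, inV1 y & balanced_edge x y].

End PP.

(* Read P as l1 x1 x2 l2 (in one of its two directions) and P' from its end o
   as o m.  Suppose x2 had a free edge to some y in V_1 other than o.  Gluing
   l1 x1 to o m along x1o and attaching the reversed x2 l2 to a spanning path
   of y's component along x2y, or a variant of this when y lies on P or P',
   yields a path partition with fewer components; the only exception is y the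
   far end of a tail x2 l2 of at least three vertices, where x2 l2 closes into
   a new cycle component instead.  Both contradict canonicity.  Since x2 lies
   in V_2 it has some free edge into V_1, which must therefore go to o. *)

From mathcomp Require Import all_boot.
Set Implicit Arguments. Unset Strict Implicit. Unset Printing Implicit Defensive.

Lemma mem_zip_beheadP (T : eqType) (c : seq T) u v :
  reflect (exists l1 l2, c = l1 ++ u :: v :: l2) ((u, v) \in zip c (behead c)).
Proof.
apply: (iffP idP).
  elim: c => [//|x [//|y c] IH] /=; rewrite in_cons => /orP [/eqP [-> ->]|/IH].
    by exists [::], c.
  by case=> l1 [l2 ->]; exists (x :: l1), l2.
case=> l1 [l2 ->]; elim: l1 => [|a l1 IH] /=; first by rewrite mem_head.
by case: l1 IH => [|b l1] IH; rewrite in_cons IH orbT.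
Qed.

Lemma mem_zip_behead_rev (T : eqType) (c : seq T) u v :
  ((u, v) \in zip (rev c) (behead (rev c))) = ((v, u) \in zip c (behead c)).
Proof.
apply/mem_zip_beheadP/mem_zip_beheadP => -[l1 [l2 E]]; exists (rev l2), (rev l1).
  by rewrite -[c]revK E rev_cat !rev_cons -!cats1 -!catA.
by rewrite E rev_cat !rev_cons -!cats1 -!catA.
Qed.

Lemma consec_rev (T : finType) (c : seq T) u v : consec (rev c) u v = consec c u v.
Proof. by rewrite /consec !mem_zip_behead_rev orbC. Qed.

Lemma consec_orient (T : finType) (c : seq T) u v : consec c u v ->
  exists l1 l2, rcons l1 u ++ v :: l2 = c \/ rcons l1 u ++ v :: l2 = rev c.
Proof.
case/orP; last rewrite -mem_zip_behead_rev.
  by case/mem_zip_beheadP=> l1 [l2 ->]; exists l1, l2; left; rewrite cat_rcons.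
by case/mem_zip_beheadP=> l1 [l2 E]; exists l1, l2; right; rewrite cat_rcons.
Qed.

Lemma end_vertex_rev (T : finType) (c : seq T) x : end_vertex (rev c) x = end_vertex c x.
Proof.
rewrite /end_vertex; case/lastP: c => [//|p y].
have last_rev : last y (rev p) = head y p by case: p => //= a p; rewrite rev_cons last_rcons.
by rewrite rev_rcons /= last_rcons last_rev orbC; case: p last_rev.
Qed.

Lemma end_vertex_cons (T : finType) (o z : T) m :
  end_vertex (o :: m) z -> z = o \/ z = last o m.
Proof. by rewrite /end_vertex /= => /orP [] /eqP <-; [left|right]. Qed.

Lemma end_vertex_rcons_cat (T : finType) (l1 l2 : seq T) x1 x2 z :
  end_vertex (rcons l1 x1 ++ x2 :: l2) z -> z = head x1 l1 \/ z = last x2 l2.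
Proof.
rewrite /end_vertex => /andP [_] /orP [] /eqP <-; first by left; case: l1.
by right; rewrite last_cat.
Qed.

Section GraphPaths.
Variables (T : finType) (e : rel T).

Lemma gpath_sorted s : is_gpath e s = sorted e s.
Proof. by case: s. Qed.

Lemma gpath_cat z s1 s2 : s1 != [::] -> s2 != [::] ->
  is_gpath e (s1 ++ s2) = [&& is_gpath e s1, e (last z s1) (head z s2) & is_gpath e s2].
Proof. by case: s1 => [//|x p]; case: s2 => [//|y q] _ _; rewrite /= cat_path /= andbA. Qed.

Lemma gpath_rcons_cat l1 x y l2 :
  is_gpath e (rcons l1 x ++ y :: l2) = [&& is_gpath e (rcons l1 x), e x y & is_gpath e (y :: l2)].
Proof. by rewrite (gpath_cat x) ?last_rcons //; case: l1. Qed.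

Lemma cycle_comp_closed_path x p :
  is_gpath e (x :: p) -> e (last x p) x -> 1 < size p -> cycle_comp e (x :: p).
Proof.
move=> gp ex sz; apply/andP; split=> //; apply/hasP; exists (x :: p).
  by rewrite mem_permutations.
by rewrite /= rcons_path ex andbT.
Qed.

Lemma cycle_comp_spanning_path c y :
  cycle_comp e c -> y \in c -> exists q, perm_eq (y :: q) c /\ is_gpath e (y :: q).
Proof.
case/andP=> _ /hasP [p]; rewrite mem_permutations => pc cyc yc.
have [i q E] := rot_to (etrans (perm_mem pc y) yc : y \in p).
exists q; split; first by rewrite -E perm_rot.
by move: cyc; rewrite -(rot_cycle i) E /= rcons_path => /andP [].
Qed.

Definition repartition (old nw : seq (seq T)) : bool :=
  [&& all (fun c => c != [::]) nw, all (is_gpath e) nw & perm_eq (flatten nw) (flatten old)].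

Lemma path_partition_repartition S old nw R : is_path_partition e S ->
  perm_eq S (old ++ R) -> repartition old nw -> is_path_partition e (nw ++ R).
Proof.
case=> ne gp un cov pS /and3P [nen gpn pf].
have pF : perm_eq (flatten S) (flatten (nw ++ R)).
  by apply: perm_trans (perm_flatten pS) _; rewrite !flatten_cat perm_cat2r perm_sym.
split.
- by rewrite all_cat nen; move: ne; rewrite (perm_all _ pS) all_cat => /andP [].
- by rewrite all_cat gpn; move: gp; rewrite (perm_all _ pS) all_cat => /andP [].
- by rewrite -(perm_uniq pF).
- by move=> v; rewrite -(perm_mem pF).
Qed.

Section Canonical.
Variables (S : seq (seq T)) (Scan : canonical_pp e S).

Lemma canonical_repartition_size old nw R :
  perm_eq S (old ++ R) -> repartition old nw -> size old <= size nw.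
Proof.
case: Scan => PP min_size _ _ pS rep.
have := min_size _ (path_partition_repartition PP pS rep).
by rewrite (perm_size pS) !size_cat leq_add2r.
Qed.

Lemma canonical_repartition_cycles old nw R :
  perm_eq S (old ++ R) -> repartition old nw -> size nw = size old ->
  count (cycle_comp e) nw <= count (cycle_comp e) old.
Proof.
case: Scan => PP _ max_cycles _ pS rep sz.
have := max_cycles _ (path_partition_repartition PP pS rep).
by rewrite (perm_size pS) (permP pS) !size_cat !count_cat sz leq_add2r; apply.
Qed.

End Canonical.

Hypothesis e_sym : symmetric e.

Lemma gpath_rev s : is_gpath e (rev s) = is_gpath e s.
Proof.
rewrite !gpath_sorted rev_sorted; case: s => //= x p.
by apply: eq_path => a b; rewrite e_sym.
Qed.

Lemma end_vertex_spanning_path c o : end_vertex c o -> is_gpath e c ->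
  exists m, [/\ perm_eq (o :: m) c, is_gpath e (o :: m)
              & forall z, end_vertex c z -> z = o \/ z = last o m].
Proof.
move=> oc; case/andP: (oc) => + /orP [].
  case: c oc => [//|a q] oc _ /= /eqP <- gc.
  by exists q; split=> // z; apply: end_vertex_cons.
case/lastP: c oc => [//|q a] oc _; rewrite last_rcons => /eqP <- gc.
exists (rev q); split.
- by rewrite -rev_rcons perm_rev.
- by rewrite -rev_rcons gpath_rev.
- by move=> z; rewrite -end_vertex_rev rev_rcons; apply: end_vertex_cons.
Qed.

End GraphPaths.

Section Rerouting.
Variables (T : finType) (e : rel T).
Hypotheses (e_sym : symmetric e) (e_irr : irreflexive e).
Variables (S : seq (seq T)) (Scan : canonical_pp e S).
Variables (P P' : seq T) (R : seq (seq T)).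
Hypotheses (pS : perm_eq S (P :: P' :: R))
  (P_path : path_comp e P) (P'_path : path_comp e P').
Variables (l1 l2 : seq T) (x1 x2 : T).
Let Q := rcons l1 x1 ++ x2 :: l2.
Hypothesis P_split : Q = P \/ Q = rev P.
Variables (o : T) (m : seq T).
Hypotheses (P'_from_o : perm_eq (o :: m) P') (gpath_P'_from_o : is_gpath e (o :: m))
  (ends_P' : forall z, end_vertex P' z -> z = o \/ z = last o m)
  (x1o : e x1 o).

Let perm_Q : perm_eq Q P.
Proof. by case: P_split => ->; rewrite ?perm_rev. Qed.

Let gpath_Q : is_gpath e Q.
Proof.
have [[_ gpS _ _] _ _ _] := Scan.
have gP : is_gpath e P by apply: (allP gpS); rewrite (perm_mem pS) mem_head.
by case: P_split => ->; rewrite ?(gpath_rev e_sym).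
Qed.

Let gpath_l1x1 : is_gpath e (rcons l1 x1).
Proof. by move: gpath_Q; rewrite /Q gpath_rcons_cat => /and3P []. Qed.

Let gpath_x2l2 : is_gpath e (x2 :: l2).
Proof. by move: gpath_Q; rewrite /Q gpath_rcons_cat => /and3P []. Qed.

Let gpath_l1x1_P' : is_gpath e (rcons l1 x1 ++ o :: m).
Proof. by rewrite gpath_rcons_cat gpath_l1x1 x1o. Qed.

Let count_Q a : count a P = count a (rcons l1 x1) + count a (x2 :: l2).
Proof. by rewrite -(permP perm_Q) count_cat. Qed.

Let count_P' a : count a P' = count a (o :: m).
Proof. by rewrite (permP P'_from_o). Qed.

Let no_fewer_components old nw R' :
  perm_eq S (old ++ R') -> repartition e old nw -> size nw < size old -> False.
Proof. by move=> pS' rep; rewrite ltnNge (canonical_repartition_size Scan pS' rep). Qed.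

Lemma x2_no_edge_to_other_component y c q R' : perm_eq R (c :: R') ->
  perm_eq (y :: q) c -> is_gpath e (y :: q) -> ~~ e x2 y.
Proof.
move=> Rc Yc gY; apply/negP => x2y.
apply: (no_fewer_components (old := [:: P; P'; c]) (R' := R')
          (nw := [:: rcons l1 x1 ++ o :: m; rcons (rev l2) x2 ++ y :: q])) => //.
  by apply: perm_trans pS _; rewrite /= !perm_cons.
apply/and3P; split.
- by rewrite /= -!nilpE !cat_nilp !andbF.
- by rewrite /= gpath_l1x1_P' gpath_rcons_cat -rev_cons (gpath_rev e_sym) gpath_x2l2 x2y gY.
apply/permP => a; rewrite /= !cats0 !count_cat count_Q count_P' -(permP Yc).
by rewrite -rev_cons count_rev addnACA.
Qed.

Lemma x2_no_edge_to_end_of_P' : ~~ e x2 (last o m).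
Proof.
apply/negP => x2y.
apply: (no_fewer_components (old := [:: P; P']) (R' := R)
          (nw := [:: (rcons l1 x1 ++ o :: m) ++ x2 :: l2])) => //.
apply/and3P; split.
- by rewrite /= -!nilpE !cat_nilp !andbF.
- by rewrite /= andbT (gpath_cat e x2) -?nilpE ?cat_nilp ?andbF // last_cat /= e_sym x2y gpath_l1x1_P'.
apply/permP => a; rewrite /= !cats0 !count_cat count_Q count_P'.
by rewrite addnAC.
Qed.

Lemma x2_no_edge_to_start_of_P : ~~ e x2 (head x1 l1).
Proof.
apply/negP => x2y.
apply: (no_fewer_components (old := [:: P; P']) (R' := R)
          (nw := [:: rev (x2 :: l2) ++ rcons l1 x1 ++ o :: m])) => //.
apply/and3P; split.
- by rewrite /= -!nilpE !cat_nilp !andbF.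
- rewrite /= (gpath_cat e x2) -?nilpE ?rev_nilp ?cat_nilp ?andbF // (gpath_rev e_sym).
  by rewrite rev_cons last_rcons gpath_x2l2 gpath_l1x1_P'; case: l1 x2y => [|a l] /= ->.
apply/permP => a; rewrite /= !cats0 !count_cat count_Q count_P' count_rev.
by rewrite addnA [count a (rcons _ _) + _]addnC.
Qed.

(* Same number of components, but one more cycle component. *)
Lemma x2_no_edge_to_far_end_of_P : 1 < size l2 -> ~~ e x2 (last x2 l2).
Proof.
move=> l2_long; apply/negP => x2y.
have cyc : cycle_comp e (x2 :: l2) by rewrite cycle_comp_closed_path // e_sym.
have [ncP ncP'] : ~~ cycle_comp e P /\ ~~ cycle_comp e P'.
  by case/andP: P_path; case/andP: P'_path.
have rep : repartition e [:: P; P'] [:: rcons l1 x1 ++ o :: m; x2 :: l2].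
  apply/and3P; split.
  - by rewrite /= -!nilpE !cat_nilp !andbF.
  - by rewrite /= gpath_l1x1_P' andbT.
  apply/permP => a; rewrite /= !cats0 !count_cat count_Q count_P'.
  by rewrite addnAC.
have := canonical_repartition_cycles Scan (old := [:: P; P']) pS rep erefl.
by rewrite /= cyc (negbTE ncP) (negbTE ncP') addn1.
Qed.

Let consec_Q u v : consec P u v = consec Q u v.
Proof. by case: P_split => ->; rewrite ?consec_rev. Qed.

Lemma x2_no_free_edge_to_end_of_P y : end_vertex P y -> ~~ free_edge e S x2 y.
Proof.
have end_Q : end_vertex P y = end_vertex Q y.
  by case: P_split => ->; rewrite ?end_vertex_rev.
rewrite end_Q => /end_vertex_rcons_cat [->|->].
  by rewrite /free_edge (negbTE x2_no_edge_to_start_of_P).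
have nbrs_x2 b : l2 = [:: b] -> path_nbrs e S x2 b.
  move=> l2b; apply/hasP; exists P; first by rewrite (perm_mem pS) mem_head.
  rewrite P_path consec_Q /Q l2b; apply/orP; left.
  by apply/mem_zip_beheadP; exists (rcons l1 x1), [::].
case: l2 nbrs_x2 x2_no_edge_to_far_end_of_P => [|b [|b' l]] nbrs_x2 far_end.
- by rewrite /free_edge /= e_irr.
- by rewrite /free_edge nbrs_x2 ?andbF.
- by rewrite /free_edge (negbTE (far_end isT)).
Qed.

Lemma x2_free_edge_to_V1 y : inV1 e S y -> free_edge e S x2 y -> y = o.
Proof.
have [[_ gpS _ _] _ _ _] := Scan.
have x2_no_edge_in_R c q : c \in R -> perm_eq (y :: q) c -> is_gpath e (y :: q) ->
    ~~ free_edge e S x2 y.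
  move=> cR yq gq; rewrite /free_edge.
  by rewrite (negbTE (x2_no_edge_to_other_component (perm_to_rem cR) yq gq)).
move=> y1 x2y; case: (eqVneq y o) => // y_o; exfalso; move: x2y; apply/negP.
case/orP: y1 => /hasP [c cS /andP [c_kind y_c]];
  move: cS; rewrite (perm_mem pS) !in_cons => /or3P [/eqP c_P|/eqP c_P'|cR].
- by rewrite c_P in y_c; apply: x2_no_free_edge_to_end_of_P.
- rewrite c_P' in y_c; case: (ends_P' y_c) => y_end; first by rewrite y_end eqxx in y_o.
  by rewrite /free_edge y_end (negbTE x2_no_edge_to_end_of_P').
- have gc : is_gpath e c by apply: (allP gpS); rewrite (perm_mem pS) !in_cons cR !orbT.
  have [q [yq gq _]] := end_vertex_spanning_path e_sym y_c gc.
  exact: x2_no_edge_in_R cR yq gq.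
- by move: P_path; rewrite /path_comp -c_P c_kind andbF.
- by move: P'_path; rewrite /path_comp -c_P' c_kind andbF.
- have [q [yq gq]] := cycle_comp_spanning_path c_kind y_c.
  exact: x2_no_edge_in_R cR yq gq.
Qed.

End Rerouting.

Theorem mainTheorem9 (T : finType) (e : rel T)
  (e_sym : symmetric e) (e_irr : irreflexive e)
  (regular6 : forall v : T, #|[set u | e v u]| = 6)
  (S : seq (seq T)) (Scan : canonical_pp e S)
  (P : seq T) (HP : P \in S) (HPpath : path_comp e P)
  (x1 x2 : T) (Hx1 : inV2 e S x1) (Hx2 : inV2 e S x2)
  (Hnb : consec P x1 x2)
  (o : T) (P' : seq T) (HP' : P' \in S) (HP'path : path_comp e P')
  (HneqP : P' != P) (Hoend : end_vertex P' o)
  (Hgo : goes_to e S x1 o) :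
  goes_to e S x2 o /\ (forall y : T, goes_to e S x2 y -> y = o).
Proof.
have [[_ gpS _ _] _ _ _] := Scan.
have pS : perm_eq S (P :: P' :: rem P' (rem P S)).
  by rewrite (perm_trans (perm_to_rem HP)) // perm_cons perm_to_rem // rem_mem.
have [m [P'_from_o gpath_from_o ends_P']] :=
  end_vertex_spanning_path e_sym Hoend (allP gpS _ HP').
have [l1 [l2 P_split]] := consec_orient Hnb.
have [_ o1 /andP [x1o_free _]] := and3P Hgo.
have x1o : e x1 o by case/and3P: x1o_free.
have to_o := x2_free_edge_to_V1 e_sym e_irr Scan pS HPpath HP'path P_split
               P'_from_o gpath_from_o ends_P' x1o.
split; last by move=> y /and3P [_ y1 /andP [x2y _]]; apply: to_o.
case/andP: (Hx2) => _ /existsP [y /andP [y1 x2y]].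
by rewrite /goes_to /balanced_edge Hx2 o1 -(to_o y y1 x2y) x2y orbT.
Qed.
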